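(* Let $x_0\in\mathbb{R}^d$, let $\beta\in\mathbb{R}$, let $(\alpha_k)_{k\ge 0}$ be nonzero step sizes, and let $\xi_0,\xi_1,\dots$ be a fixed sequence of samples. Consider the momentum method $$m_0=0,\qquad m_{k+1}=\beta m_k+(1-\beta)\nabla f(x_k,\xi_k),\qquad x_{k+1}=x_k-\alpha_k m_{k+1}\quad(k\ge 0),$$ and the iterate-averaging method $$x'_0=z_0=x_0,\qquad z_{k+1}=z_k-\eta_k\nabla f(x'_k,\xi_k),\qquad x'_{k+1}=(1-c_{k+1})x'_k+c_{k+1}z_{k+1}\quad(k\ge 0).$$ Suppose $c_1\in(0,1)$, that for all $k\ge 1$ $$c_{k+1}=\beta\,\frac{\alpha_k}{\alpha_{k-1}}\,\frac{c_k}{1-c_k},$$ and that for all $k\ge 0$ $$\eta_k=\frac{\alpha_k}{c_{k+1}}(1-\beta),$$ where all these quantities are assumed well defined (i.e. $c_k\notin\{0,1\}$ for all $k\ge1$). Then $x_k=x'_k$ for all $k\ge 0$.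
   Context: $\nabla f(x,\xi)$ denotes the (sub)gradient of $f(\cdot,\xi)$ at $x$ returned for sample $\xi$; both methods use the same samples $\xi_k$ at step $k$. No projection is involved (the constraint set is all of $\mathbb{R}^d$). *)

From mathcomp Require Import all_boot all_order all_algebra.
Set Implicit Arguments. Unset Strict Implicit. Unset Printing Implicit Defensive.
Import Order.TTheory GRing.Theory Num.Theory.
Local Open Scope ring_scope.

(* [grad x s] is the (sub)gradient of f(., s) at x returned for sample s:
   an arbitrary oracle.  [xi k] is the fixed sample used at step k. *)

Fixpoint momentum (R : realFieldType) (d : nat) (Xi : Type)
    (grad : 'rV[R]_d -> Xi -> 'rV[R]_d) (xi : nat -> Xi)
    (alpha : nat -> R) (beta : R) (x0 : 'rV[R]_d) (k : nat)
    : 'rV[R]_d * 'rV[R]_d :=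
  match k with
  | 0 => (x0, 0)
  | k'.+1 =>
      let: (x, m) := momentum grad xi alpha beta x0 k' in
      let m' := beta *: m + (1 - beta) *: grad x (xi k') in
      (x - alpha k' *: m', m')
  end.

Fixpoint averaging (R : realFieldType) (d : nat) (Xi : Type)
    (grad : 'rV[R]_d -> Xi -> 'rV[R]_d) (xi : nat -> Xi)
    (eta c : nat -> R) (x0 : 'rV[R]_d) (k : nat)
    : 'rV[R]_d * 'rV[R]_d :=
  match k with
  | 0 => (x0, x0)
  | k'.+1 =>
      let: (x', z) := averaging grad xi eta c x0 k' in
      let z' := z - eta k' *: grad x' (xi k') in
      ((1 - c k'.+1) *: x' + c k'.+1 *: z', z')
  end.

(* Both methods are driven by the same gradients, so it suffices to express the
   auxiliary sequence z_k of iterate averaging through the momentum state: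
   z_k = x_k - gamma_k m_k with gamma_k = alpha_(k-1) (1 - c_k) / c_k.  The
   recursion for c_(k+1) is exactly what makes gamma_k = alpha_k beta / c_(k+1),
   and with this value one averaging step reproduces one momentum step. *)
From mathcomp Require Import all_boot all_order all_algebra.
From mathcomp Require Import ring.
Import Order.TTheory GRing.Theory Num.Theory.
Local Open Scope ring_scope.

Lemma averaging_step_momentum (R : fieldType) (V : lmodType R) (x m g : V)
    (a b c gamma : R) :
  c != 0 -> gamma *: m = (a * b / c) *: m ->
  let m' := b *: m + (1 - b) *: g in
  let z' := x - gamma *: m - (a / c * (1 - b)) *: g in
  ((1 - c) *: x + c *: z', z') = (x - a *: m', x - a *: m' - (a * (1 - c) / c) *: m').
Proof.
move=> c0 hgamma m' z'; rewrite /z' hgamma {hgamma z'} /m'.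
have hx : (1 - c) *: x + c *: x = x by rewrite -scalerDl subrK scale1r.
congr (_, _).
- rewrite !scalerBr !scalerA !addrA hx -!addrA -opprD; congr (_ - _).
  rewrite scalerDr !scalerA; congr (_ + _); congr (_ *: _); field; exact: c0.
- rewrite -!addrA -!opprD; congr (_ - _).
  rewrite -scalerDl scalerDr !scalerA; congr (_ + _); congr (_ *: _); field; exact: c0.
Qed.

Lemma momentum_offset_rec (R : fieldType) (a a' b c : R) :
  a != 0 -> a' != 0 -> b != 0 -> c != 0 -> c != 1 ->
  a' * (1 - c) / c = a * b / (b * (a / a') * (c / (1 - c))).
Proof.
move=> a0 a'0 b0 c0 c1; have c1' : 1 - c != 0 by rewrite subr_eq0 eq_sym.
by field; rewrite a0 a'0 b0 c0 c1'.
Qed.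

Section MomentumAveraging.

Context {R : realFieldType} {d : nat} {Xi : Type}.
Context {grad : 'rV[R]_d -> Xi -> 'rV[R]_d} {xi : nat -> Xi} {x0 : 'rV[R]_d}.
Context {beta : R} {alpha eta c : nat -> R}.
Hypothesis halpha : forall k, alpha k != 0.
Hypothesis hc_def : forall k, (1 <= k)%N -> c k != 0 /\ c k != 1.
Hypothesis hc_rec : forall k, (1 <= k)%N ->
  c k.+1 = beta * (alpha k / alpha k.-1) * (c k / (1 - c k)).
Hypothesis heta : forall k, eta k = alpha k / c k.+1 * (1 - beta).

Local Notation momentum := (momentum grad xi alpha beta x0).
Local Notation averaging := (averaging grad xi eta c x0).

Definition averaging_offset k := alpha k.-1 * (1 - c k) / c k.

(* At k = 0 the offset is junk (c 0 is unconstrained), but m_0 = 0. *)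
Lemma averaging_offset_momentum k :
  averaging_offset k *: (momentum k).2 = (alpha k * beta / c k.+1) *: (momentum k).2.
Proof.
case: k => [|k]; first by rewrite /= !scaler0.
have [ck0 ck1] := hc_def k.+1 isT.
have [cSk0 _] := hc_def k.+2 isT.
have beta0 : beta != 0.
  by apply: contraNneq cSk0 => beta0; rewrite hc_rec // beta0 !mul0r.
congr (_ *: _); rewrite [c k.+2]hc_rec //; exact: momentum_offset_rec.
Qed.

Lemma averaging_momentum k :
  averaging k = ((momentum k).1, (momentum k).1 - averaging_offset k *: (momentum k).2).
Proof.
elim: k => [|k IH] /=; first by rewrite scaler0 subr0.
rewrite IH /=; have := averaging_offset_momentum k.
case: (momentum k) => x m /= hm.
rewrite heta; apply: averaging_step_momentum hm.
by case: (hc_def k.+1 isT).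
Qed.

End MomentumAveraging.

Theorem theorem1 (R : realFieldType) (d : nat) (Xi : Type)
    (grad : 'rV[R]_d -> Xi -> 'rV[R]_d) (xi : nat -> Xi)
    (x0 : 'rV[R]_d) (beta : R) (alpha eta c : nat -> R)
    (halpha : forall k, alpha k != 0)
    (hc_def : forall k, (1 <= k)%N -> c k != 0 /\ c k != 1)
    (hc1 : 0 < c 1 < 1)
    (hc_rec : forall k, (1 <= k)%N ->
       c k.+1 = beta * (alpha k / alpha k.-1) * (c k / (1 - c k)))
    (heta : forall k, eta k = alpha k / c k.+1 * (1 - beta)) :
  forall k, (momentum grad xi alpha beta x0 k).1
            = (averaging grad xi eta c x0 k).1.
Proof.
by move=> k; rewrite (averaging_momentum halpha hc_def hc_rec heta).
Qed.
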